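(* Let $A=\mathrm{diag}(\mathbf{a})$ with $\mathbf{a}\in\mathbb{R}^n$, $\beta>0$, $f(\mathbf{z})=\frac12\mathbf{z}^*A\mathbf{z}+\frac{\beta}{2}\sum_k|z_k|^4$, let $W\in\mathbb{C}^{n\times n}$ be Hermitian and $\sigma>0$, and set $f_\sigma(\mathbf{z})=f(\mathbf{z})+\frac{\sigma}{2}\mathbf{z}^*W\mathbf{z}$. Suppose $\mathbf{z}_0$ is a global minimizer of $f$ on $\mathbb{CS}^{n-1}$ and $\mathbf{y}\in\mathbb{CS}^{n-1}$ satisfies $f_\sigma(\mathbf{y})\le\min_{\mathbf{z}\in\llbracket\mathbf{z}_0\rrbracket}f_\sigma(\mathbf{z})$. Then $\min_{\mathbf{z}\in\llbracket\mathbf{z}_0\rrbracket}\|\mathbf{y}-\mathbf{z}\|_4\le\sqrt[3]{2\sigma\beta^{-1}\|W\|_2\,n^{1/4}}$.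
   Context: $\mathbb{CS}^{n-1}$ is the unit sphere of $\mathbb{C}^n$; $\llbracket\mathbf{z}_0\rrbracket=\{\mathbf{y}\in\mathbb{C}^n:|y_k|=|(z_0)_k|\ \forall k\}$; $\|W\|_2$ is the spectral norm. *)

From HB Require Import structures.
From mathcomp Require Import all_boot all_order all_algebra.
From mathcomp Require Import complex.
From mathcomp Require Import all_classical all_reals.
From mathcomp Require Import exp.

Set Implicit Arguments.
Unset Strict Implicit.
Unset Printing Implicit Defensive.
Import Order.TTheory GRing.Theory Num.Theory.
Local Open Scope ring_scope.
Local Open Scope complex_scope.

Definition cmod (R : rcfType) (z : R[i]) : R := Normc.normc z.

(* Hermitian form z^* W z (real part; it is real when W is Hermitian) *)
Definition qform (R : rcfType) (n : nat) (W : 'M[R[i]]_n) (z : 'cV[R[i]]_n) : R :=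
  complex.Re (\sum_(i < n) \sum_(j < n) (z i ord0)^* * W i j * z j ord0).

Definition is_hermitian (R : rcfType) (n : nat) (W : 'M[R[i]]_n) : Prop :=
  forall i j, W j i = (W i j)^*.

Definition norm2 (R : rcfType) (n : nat) (z : 'cV[R[i]]_n) : R :=
  Num.sqrt (\sum_(k < n) cmod (z k ord0) ^+ 2).

Definition norm4 (R : realType) (n : nat) (z : 'cV[R[i]]_n) : R :=
  (\sum_(k < n) cmod (z k ord0) ^+ 4) `^ (4%:R^-1).

Definition csphere (R : rcfType) (n : nat) : set 'cV[R[i]]_n :=
  [set z | norm2 z = 1].

(* [[z0]] : vectors with the same entrywise moduli as z0 *)
Definition same_mod (R : rcfType) (n : nat) (z0 : 'cV[R[i]]_n) : set 'cV[R[i]]_n :=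
  [set y | forall k, cmod (y k ord0) = cmod (z0 k ord0)].

Definition spec_norm (R : realType) (n : nat) (W : 'M[R[i]]_n) : R :=
  sup [set norm2 (W *m x) | x in @csphere R n].

Definition fobj (R : rcfType) (n : nat) (a : 'rV[R]_n) (beta : R) (z : 'cV[R[i]]_n) : R :=
  2^-1 * qform (diag_mx (map_mx (real_complex R) a)) z
  + beta / 2 * \sum_(k < n) cmod (z k ord0) ^+ 4.

Definition fsigma (R : rcfType) (n : nat) (a : 'rV[R]_n) (beta : R)
  (sigma : R) (W : 'M[R[i]]_n) (z : 'cV[R[i]]_n) : R :=
  fobj a beta z + sigma / 2 * qform W z.

(* As a function of the squared moduli p_k = |z_k|^2, f is a quadratic of
   curvature beta on the simplex, and the squared moduli of z0 minimise it there; the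
   first-order optimality condition then gives
   f(y) - f(z0) >= beta/2 ||p(y) - p(z0)||^2.  Take z in [[z0]] with the phases
   of y: then |y_k - z_k| = ||y_k| - |z0_k||, so ||y - z||_4^4 is at most
   ||p(y) - p(z0)||^2.  On the other side f(z) = f(z0) and f_sigma(y) <= f_sigma(z)
   bound f(y) - f(z0) by sigma/2 (z^*Wz - y^*Wy) <= sigma ||W||_2 ||y - z||_2,
   and ||y - z||_2 <= n^(1/4) ||y - z||_4.  Comparing the two bounds gives
   ||y - z||_4^3 <= 2 sigma beta^-1 ||W||_2 n^(1/4). *)

From HB Require Import structures.
From mathcomp Require Import all_boot all_order all_algebra.
From mathcomp Require Import complex.
From mathcomp Require Import all_classical all_reals.
From mathcomp Require Import exp.
From mathcomp Require Import ring lra.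
Import Order.TTheory GRing.Theory Num.Theory.
Local Open Scope ring_scope.
Local Open Scope classical_set_scope.
Local Open Scope complex_scope.

Section ComplexModulus.
Context {R : rcfType}.
Implicit Types x y : R[i].

Lemma cmod_ge0 x : 0 <= cmod x.
Proof. by case: x => a b; apply: sqrtr_ge0. Qed.

Lemma cmod0 : cmod (0 : R[i]) = 0.
Proof. exact: Normc.normc0. Qed.

Lemma cmodR (r : R) : cmod r%:C = `|r|.
Proof. by rewrite /cmod /= expr0n addr0 sqrtr_sqr. Qed.

Lemma cmodM x y : cmod (x * y) = cmod x * cmod y.
Proof. exact: Normc.normcM. Qed.

Lemma cmodN x : cmod (- x) = cmod x.
Proof. exact: normcN. Qed.

Lemma cmodJ x : cmod x^* = cmod x.
Proof. by case: x => a b; rewrite /cmod /= sqrrN. Qed.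

Lemma cmod_eq0 x : (cmod x == 0) = (x == 0).
Proof.
by apply/eqP/eqP => [/Normc.eq0_normc | ->] //; apply: Normc.normc0.
Qed.

Lemma Re_le_cmod x : `|complex.Re x| <= cmod x.
Proof. by case: x => a b; rewrite -sqrtr_sqr ler_wsqrtr // lerDl sqr_ge0. Qed.

Lemma mulJc x : x^* * x = (cmod x ^+ 2)%:C.
Proof.
case: x => a b; rewrite sqr_sqrtr ?addr_ge0 ?sqr_ge0 //.
by apply/eqP; rewrite eq_complex /=; apply/andP; split; apply/eqP; ring.
Qed.

Lemma cmod_sum {I : Type} (r : seq I) (P : pred I) (F : I -> R[i]) :
  cmod (\sum_(i <- r | P i) F i) <= \sum_(i <- r | P i) cmod (F i).
Proof.
elim/big_ind2: _ => [|x1 x2 y1 y2 le1 le2|//]; first by rewrite cmod0.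
exact: le_trans (le_normcD _ _) (lerD le1 le2).
Qed.

End ComplexModulus.

Lemma cauchy_schwarz_sqr {R : realFieldType} n (u v : 'I_n -> R) :
  (\sum_i u i * v i) ^+ 2 <= (\sum_i u i ^+ 2) * (\sum_i v i ^+ 2).
Proof.
set A := \sum_i u i ^+ 2; set B := \sum_i v i ^+ 2; set S := \sum_i u i * v i.
have B_ge0 : 0 <= B by apply: sumr_ge0 => i _; apply: sqr_ge0.
have [B0|B_neq0] := eqVneq B 0.
  have v0 i : v i = 0.
    apply/eqP; rewrite -sqrf_eq0; move/eqP: B0.
    by rewrite psumr_eq0 => [/allP/(_ i (mem_index_enum _))|j _]; rewrite ?sqr_ge0.
  by rewrite /S big1 => [|i _]; rewrite ?v0 ?mulr0 // expr0n /= B0 mulr0.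
have expand : \sum_i (u i * B - v i * S) ^+ 2 = B * (A * B - S ^+ 2).
  rewrite (eq_bigr (fun i => B ^+ 2 * u i ^+ 2 - 2 * B * S * (u i * v i) + S ^+ 2 * v i ^+ 2));
    last by move=> i _; ring.
  rewrite big_split /= sumrB -!mulr_sumr -/A -/B -/S; ring.
have : 0 <= B * (A * B - S ^+ 2) by rewrite -expand sumr_ge0 // => i _; apply: sqr_ge0.
by rewrite pmulr_rge0 ?subr_ge0 // lt_def B_neq0.
Qed.

Lemma normB_expr4_le {R : realDomainType} (u v : R) :
  0 <= u -> 0 <= v -> `|u - v| ^+ 4 <= (u ^+ 2 - v ^+ 2) ^+ 2.
Proof.
move=> u_ge0 v_ge0.
rewrite (_ : 4 = 2 + 2)%N // exprD real_normK ?realB ?ger0_real //.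
rewrite (_ : _ ^+ 2 = (u - v) ^+ 2 * (u + v) ^+ 2); last by ring.
by rewrite ler_wpM2l ?sqr_ge0 //; nra.
Qed.

Section QuadraticGrowth.
Context {R : realFieldType} {n : nat}.
Implicit Types (a : 'rV[R]_n) (beta : R) (p q : 'I_n -> R).

Lemma lin_coef_ge0 (L C : R) : (forall t, 0 < t <= 1 -> 0 <= t * L + t ^+ 2 * C) -> 0 <= L.
Proof.
move=> near0; rewrite leNgt; apply/negP => L_lt0.
have C1_gt0 : 0 < `|C| + 1 by rewrite ltr_wpDl.
pose t := Num.min 1 (- L / (`|C| + 1)).
have t_gt0 : 0 < t by rewrite lt_min ltr01 divr_gt0 // oppr_gt0.
have t_le1 : t <= 1 by rewrite ge_min lexx.
have tC : t * (`|C| + 1) <= - L by rewrite -ler_pdivlMr // ge_min lexx orbT.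
have tCabs : t * C <= t * `|C| := ler_wpM2l (ltW t_gt0) (ler_norm C).
have := near0 t; rewrite t_gt0 t_le1 expr2 -mulrA -mulrDr pmulr_rge0 // => /(_ isT).
by rewrite mulrDr mulr1 in tC; lra.
Qed.

Definition simplex p : Prop := (forall k, 0 <= p k) /\ \sum_k p k = 1.

Lemma simplex_segment p q t : simplex p -> simplex q -> 0 <= t <= 1 ->
  simplex (fun k => q k + t * (p k - q k)).
Proof.
move=> [p_ge0 p1] [q_ge0 q1] /andP[t_ge0 t_le1]; split=> [k|].
  have -> : q k + t * (p k - q k) = (1 - t) * q k + t * p k by ring.
  by rewrite addr_ge0 ?mulr_ge0 ?subr_ge0.
by rewrite big_split /= -mulr_sumr sumrB p1 q1 subrr mulr0 addr0.
Qed.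

Definition fquad a beta p : R := \sum_k (2^-1 * a ord0 k * p k + beta / 2 * p k ^+ 2).

Lemma fquad_segment a beta p q t :
  fquad a beta (fun k => q k + t * (p k - q k)) - fquad a beta q
  = t * \sum_k (2^-1 * a ord0 k + beta * q k) * (p k - q k)
    + t ^+ 2 * (beta / 2 * \sum_k (p k - q k) ^+ 2).
Proof. by rewrite /fquad -sumrB !mulr_sumr -big_split; apply: eq_bigr => k _ /=; field. Qed.

Lemma fquad_growth a beta p q : simplex p -> simplex q ->
  (forall v, simplex v -> fquad a beta q <= fquad a beta v) ->
  beta / 2 * \sum_k (p k - q k) ^+ 2 <= fquad a beta p - fquad a beta q.
Proof.
move=> pS qS qmin.
have L_ge0 : 0 <= \sum_k (2^-1 * a ord0 k + beta * q k) * (p k - q k).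
  apply: (@lin_coef_ge0 _ (beta / 2 * \sum_k (p k - q k) ^+ 2)) => t /andP[t_gt0 t_le1].
  rewrite -fquad_segment subr_ge0; apply/qmin/simplex_segment => //.
  by rewrite (ltW t_gt0) t_le1.
have := fquad_segment a beta p q 1.
have -> : (fun k => q k + 1 * (p k - q k)) = p by apply/funext => k; rewrite mul1r addrC subrK.
by rewrite mul1r expr1n mul1r => ->; lra.
Qed.

End QuadraticGrowth.

Section Norm2.
Context {R : rcfType}.

Lemma cauchy_schwarz n (u v : 'I_n -> R) :
  \sum_i u i * v i <= Num.sqrt (\sum_i u i ^+ 2) * Num.sqrt (\sum_i v i ^+ 2).
Proof.
rewrite -sqrtrM ?sumr_ge0 // => [|i _]; last exact: sqr_ge0.
by rewrite (le_trans (ler_norm _)) // -sqrtr_sqr ler_wsqrtr // cauchy_schwarz_sqr.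
Qed.

Lemma cmod_sum_mul_le n (x y : 'I_n -> R[i]) :
  cmod (\sum_i x i * y i)
  <= Num.sqrt (\sum_i cmod (x i) ^+ 2) * Num.sqrt (\sum_i cmod (y i) ^+ 2).
Proof.
apply: le_trans (cmod_sum _ _ _) _.
under eq_bigr do rewrite cmodM.
exact: cauchy_schwarz.
Qed.

Context {n : nat}.
Implicit Types (u v y z : 'cV[R[i]]_n) (W : 'M[R[i]]_n).

Lemma norm2_ge0 v : 0 <= norm2 v.
Proof. exact: sqrtr_ge0. Qed.

Lemma norm2Z (c : R[i]) v : norm2 (c *: v) = cmod c * norm2 v.
Proof.
rewrite /norm2 -[cmod c]ger0_norm ?cmod_ge0 // -sqrtr_sqr -sqrtrM ?sqr_ge0 //.
by rewrite mulr_sumr; congr Num.sqrt; apply: eq_bigr => k _; rewrite mxE cmodM exprMn.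
Qed.

Definition sqmod z : 'I_n -> R := fun k => cmod (z k ord0) ^+ 2.

Lemma csphere_simplex z : z \in @csphere R n <-> simplex (sqmod z).
Proof.
have S_ge0 : 0 <= \sum_k sqmod z k by apply: sumr_ge0 => k _; apply: sqr_ge0.
rewrite in_setE /csphere /norm2 /=; split => [z1|[_ ->]]; last exact: sqrtr1.
by split=> [k|]; [apply: sqr_ge0 | rewrite -[LHS]sqr_sqrtr // z1 expr1n].
Qed.

Lemma sqmod_same_mod z z0 : z \in same_mod z0 -> sqmod z = sqmod z0.
Proof. by rewrite in_setE => zM; apply/funext => k; rewrite /sqmod zM. Qed.

Lemma norm2_same_mod z z0 : z \in same_mod z0 -> norm2 z = norm2 z0.
Proof. by rewrite in_setE /norm2 => zM; under eq_bigr do rewrite zM. Qed.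

Definition sesq W u v : R :=
  complex.Re (\sum_(i < n) \sum_(j < n) (u i ord0)^* * W i j * v j ord0).

Lemma qformB W y z : qform W y - qform W z = sesq W (y - z) y + sesq W z (y - z).
Proof.
rewrite /qform /sesq -!raddfB -raddfD /=; congr complex.Re.
rewrite -sumrB -big_split; apply: eq_bigr => i _ /=.
rewrite -sumrB -big_split; apply: eq_bigr => j _ /=.
by rewrite !mxE rmorphB /=; ring.
Qed.

Lemma sesq_le W u v : `|sesq W u v| <= norm2 u * norm2 (W *m v).
Proof.
have -> : sesq W u v = complex.Re (\sum_i (u i ord0)^* * (W *m v) i ord0).
  congr complex.Re; apply: eq_bigr => i _.
  by rewrite mxE mulr_sumr; apply: eq_bigr => j _; rewrite mulrA.
apply: le_trans (Re_le_cmod _) _; apply: le_trans (cmod_sum_mul_le _ _ _) _.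
by under eq_bigr do rewrite cmodJ.
Qed.

Definition frobenius W : R := Num.sqrt (\sum_i \sum_j cmod (W i j) ^+ 2).

Lemma norm2_mulmx_frobenius W v : norm2 (W *m v) <= frobenius W * norm2 v.
Proof.
rewrite /frobenius /norm2 -sqrtrM; last by do 2!apply: sumr_ge0 => ? _; apply: sqr_ge0.
apply: ler_wsqrtr; rewrite mulr_suml; apply: ler_sum => i _.
set A := \sum_j _; set B := \sum_k _.
have A_ge0 : 0 <= A by apply: sumr_ge0 => j _; apply: sqr_ge0.
have B_ge0 : 0 <= B by apply: sumr_ge0 => k _; apply: sqr_ge0.
rewrite -(sqr_sqrtr A_ge0) -(sqr_sqrtr B_ge0) -exprMn mxE.
by rewrite ler_pXn2r ?nnegrE ?cmod_ge0 ?mulr_ge0 ?sqrtr_ge0 // cmod_sum_mul_le.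
Qed.

End Norm2.

Section Objective.
Context {R : rcfType} {n : nat}.
Implicit Types (a : 'rV[R]_n) (beta : R) (p : 'I_n -> R) (y z : 'cV[R[i]]_n).

Lemma fobjE a beta z : fobj a beta z = fquad a beta (sqmod z).
Proof.
rewrite /fobj /qform /fquad raddf_sum big_split /= !mulr_sumr.
congr (_ + _); apply: eq_bigr => i _; last by rewrite /sqmod -exprM.
rewrite (bigD1 i) //= big1 => [|j /negbTE ji]; last by rewrite !mxE eq_sym ji mulr0n mulr0 mul0r.
by rewrite addr0 !mxE eqxx mulr1n mulrAC mulJc -rmorphM /= [_ * a _ i]mulrC mulrA.
Qed.

Lemma fobj_same_mod a beta z z0 : z \in same_mod z0 -> fobj a beta z = fobj a beta z0.
Proof. by move=> /sqmod_same_mod zM; rewrite !fobjE zM. Qed.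

Definition sqrt_cvec p : 'cV[R[i]]_n := \col_k (Num.sqrt (p k))%:C.

Lemma sqmod_sqrt_cvec p : (forall k, 0 <= p k) -> sqmod (sqrt_cvec p) = p.
Proof.
by move=> p_ge0; apply/funext => k; rewrite /sqmod mxE cmodR ger0_norm ?sqrtr_ge0 ?sqr_sqrtr.
Qed.

Lemma fobj_growth a beta z0 y : z0 \in @csphere R n ->
  (forall z, z \in @csphere R n -> fobj a beta z0 <= fobj a beta z) ->
  y \in @csphere R n ->
  beta / 2 * \sum_k (sqmod y k - sqmod z0 k) ^+ 2 <= fobj a beta y - fobj a beta z0.
Proof.
move=> /csphere_simplex z0S z0min /csphere_simplex yS.
rewrite !fobjE; apply: fquad_growth => // p pS.
rewrite -(sqmod_sqrt_cvec _ pS.1) -!fobjE; apply: z0min.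
by apply/csphere_simplex; rewrite sqmod_sqrt_cvec //; case: pS.
Qed.

(* The point of [[z0]] with the phases of y. *)
Definition align y z0 : 'cV[R[i]]_n :=
  \col_k (if y k ord0 == 0 then (cmod (z0 k ord0))%:C
          else (cmod (z0 k ord0) / cmod (y k ord0))%:C * y k ord0).

Lemma align_same_mod y z0 : align y z0 \in same_mod z0.
Proof.
rewrite in_setE => k; rewrite mxE; case: eqP => [_|/eqP y_neq0].
  by rewrite cmodR ger0_norm ?cmod_ge0.
by rewrite cmodM cmodR ger0_norm ?divr_ge0 ?cmod_ge0 // divfK ?cmod_eq0.
Qed.

Lemma cmod_sub_align y z0 k :
  cmod ((y - align y z0) k ord0) = `|cmod (y k ord0) - cmod (z0 k ord0)|.
Proof.
rewrite !mxE; case: eqP => [->|/eqP y_neq0].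
  by rewrite sub0r cmodN cmodR cmod0 sub0r normrN.
set r := _ / _; have -> : y k ord0 - r%:C * y k ord0 = (1 - r)%:C * y k ord0.
  by rewrite rmorphB rmorph1 mulrBl mul1r.
rewrite cmodM cmodR -{1}(ger0_norm (cmod_ge0 (y k ord0))) -normrM.
by rewrite mulrBl mul1r /r divfK ?cmod_eq0.
Qed.

End Objective.

Section SpectralNorm.
Context {R : realType} {n : nat}.
Implicit Types (v y z : 'cV[R[i]]_n) (W : 'M[R[i]]_n).

Lemma spec_norm_ubound W : has_ubound [set norm2 (W *m x) | x in @csphere R n].
Proof.
exists (frobenius W) => _ [x xS <-].
by have := norm2_mulmx_frobenius W x; rewrite xS mulr1.
Qed.

Lemma spec_norm_ge0 W : 0 <= spec_norm W.
Proof.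
have [[x xS]|noS] := pselect (exists x, x \in @csphere R n).
  apply: le_trans (norm2_ge0 (W *m x)) _.
  by apply: (ub_le_sup (spec_norm_ubound W)); exists x => //; rewrite in_setE in xS.
rewrite /spec_norm (_ : [set _ | x in _] = set0) ?sup0 //.
by apply/seteqP; split=> [t [x xS _]|//]; case: noS; exists x; rewrite in_setE.
Qed.

Lemma norm2_mulmx_le W v : norm2 (W *m v) <= spec_norm W * norm2 v.
Proof.
have [v0|v_neq0] := eqVneq (norm2 v) 0.
  by have := norm2_mulmx_frobenius W v; rewrite v0 !mulr0.
have v_gt0 : 0 < norm2 v by rewrite lt_def v_neq0 norm2_ge0.
pose x := (norm2 v)^-1%:C *: v.
have xS : norm2 x = 1 by rewrite norm2Z cmodR ger0_norm ?invr_ge0 ?norm2_ge0 ?mulVf.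
have : norm2 (W *m x) <= spec_norm W by apply: (ub_le_sup (spec_norm_ubound W)); exists x.
rewrite -scalemxAr norm2Z cmodR ger0_norm ?invr_ge0 ?norm2_ge0 //.
by rewrite ler_pdivrMl // mulrC.
Qed.

Lemma qform_sub_le W y z : norm2 y = 1 -> norm2 z = 1 ->
  qform W z - qform W y <= 2 * spec_norm W * norm2 (y - z).
Proof.
move=> y1 z1; rewrite -opprB qformB.
have le1 := sesq_le W (y - z) y; have le2 := sesq_le W z (y - z).
have Wy := norm2_mulmx_le W y; have Wyz := norm2_mulmx_le W (y - z).
rewrite y1 z1 mulr1 mul1r in le2 Wy *.
have yz_ge0 := norm2_ge0 (y - z).
have : norm2 (y - z) * norm2 (W *m y) <= norm2 (y - z) * spec_norm W by apply: ler_wpM2l.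
have := ler_norm (- sesq W (y - z) y); have := ler_norm (- sesq W z (y - z)).
rewrite !normrN; lra.
Qed.

End SpectralNorm.

Section Norm4.
Context {R : realType}.

Lemma powR_invn_exprK (x : R) k : 0 <= x -> (0 < k)%N -> (x `^ k%:R^-1) ^+ k = x.
Proof.
move=> x_ge0 k_gt0; rewrite -powR_mulrn ?powR_ge0 // -powRrM mulVf ?powRr1 //.
by rewrite pnatr_eq0 -lt0n.
Qed.

Lemma expr_powR_invnK (x : R) k : 0 <= x -> (0 < k)%N -> (x ^+ k) `^ k%:R^-1 = x.
Proof.
move=> x_ge0 k_gt0; rewrite -powR_mulrn // -powRrM mulfV ?powRr1 //.
by rewrite pnatr_eq0 -lt0n.
Qed.

Lemma norm4_ge0 n (z : 'cV[R[i]]_n) : 0 <= norm4 z.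
Proof. exact: powR_ge0. Qed.

Lemma norm4_expr4 n (z : 'cV[R[i]]_n) : norm4 z ^+ 4 = \sum_k cmod (z k ord0) ^+ 4.
Proof.
by rewrite powR_invn_exprK // sumr_ge0 // => k _; rewrite exprn_ge0 ?cmod_ge0.
Qed.

Lemma norm2_le_norm4 n (z : 'cV[R[i]]_n) : norm2 z <= n%:R `^ 4%:R^-1 * norm4 z.
Proof.
set N := n%:R `^ _; have N_ge0 : 0 <= N by apply: powR_ge0.
have N4 : N ^+ 4 = n%:R by apply: powR_invn_exprK.
have expr4 (x : R) : x ^+ 4 = (x ^+ 2) ^+ 2 by rewrite -exprM.
have := cauchy_schwarz _ (fun _ : 'I_n => 1) (fun k => cmod (z k ord0) ^+ 2).
under eq_bigr do rewrite mul1r; under [X in _ <= Num.sqrt X * _]eq_bigr do rewrite expr1n.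
under [X in _ <= _ * Num.sqrt X]eq_bigr do rewrite -expr4.
rewrite sumr_const card_ord -norm4_expr4 -N4 !expr4 !sqrtr_sqr !ger0_norm ?exprn_ge0 ?norm4_ge0 //.
rewrite -exprMn => le_sum.
by rewrite /norm2 -[_ * _]ger0_norm ?mulr_ge0 ?norm4_ge0 // -sqrtr_sqr ler_wsqrtr.
Qed.

Lemma le_powR_inv3 (x c : R) : 0 <= x -> x ^+ 4 <= c * x -> x <= c `^ 3%:R^-1.
Proof.
move=> x_ge0 le_x4; have [->|x_neq0] := eqVneq x 0; first exact: powR_ge0.
have x_gt0 : 0 < x by rewrite lt_def x_neq0.
have le_x3 : x ^+ 3 <= c by rewrite -(ler_pM2r x_gt0) -exprSr.
rewrite -[leLHS](@expr_powR_invnK x 3) //.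
by rewrite ge0_ler_powR ?nnegrE ?invr_ge0 ?ler0n ?exprn_ge0 // (le_trans _ le_x3) ?exprn_ge0.
Qed.

Lemma norm4_sub_align_expr4 n (y z0 : 'cV[R[i]]_n) :
  norm4 (y - align y z0) ^+ 4 <= \sum_k (sqmod y k - sqmod z0 k) ^+ 2.
Proof.
rewrite norm4_expr4; apply: ler_sum => k _.
by rewrite cmod_sub_align; apply: normB_expr4_le; apply: cmod_ge0.
Qed.

End Norm4.

Theorem theorem7 (R : realType) (n : nat) (a : 'rV[R]_n) (beta sigma : R)
  (W : 'M[R[i]]_n) (z0 y : 'cV[R[i]]_n) :
  0 < beta -> is_hermitian W -> 0 < sigma ->
  z0 \in @csphere R n ->
  (forall z, z \in @csphere R n -> fobj a beta z0 <= fobj a beta z) ->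
  y \in @csphere R n ->
  (forall z, z \in same_mod z0 -> fsigma a beta sigma W y <= fsigma a beta sigma W z) ->
  exists2 z, z \in same_mod z0 &
    norm4 (y - z) <= (2 * sigma / beta * spec_norm W * n%:R `^ (4%:R^-1)) `^ (3%:R^-1).
Proof.
move=> beta_gt0 _ sigma_gt0 z0S z0min yS ymin.
have zM := align_same_mod y z0; set z := align y z0 in zM *.
exists z => //.
have y1 : norm2 y = 1 by rewrite in_setE in yS.
have z1 : norm2 z = 1 by rewrite (norm2_same_mod _ _ zM); rewrite in_setE in z0S.
set M := norm4 (y - z); set N := n%:R `^ 4%:R^-1.
have growth : beta / 2 * M ^+ 4 <= fobj a beta y - fobj a beta z.
  rewrite (fobj_same_mod _ _ _ _ zM); apply: le_trans (fobj_growth _ _ _ _ z0S z0min yS).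
  by apply: ler_wpM2l; [rewrite divr_ge0 ?ltW | apply: norm4_sub_align_expr4].
have perturb : fobj a beta y - fobj a beta z <= sigma / 2 * (qform W z - qform W y).
  by have := ymin z zM; rewrite /fsigma; lra.
have lipschitz := qform_sub_le W y z y1 z1.
have norm24 : norm2 (y - z) <= N * M := norm2_le_norm4 _ (y - z).
have key : beta / 2 * M ^+ 4 <= sigma * spec_norm W * (N * M).
  have sigma2_ge0 : 0 <= sigma / 2 by rewrite divr_ge0 ?ltW.
  have := ler_wpM2l sigma2_ge0 lipschitz.
  have := ler_wpM2l (mulr_ge0 (ltW sigma_gt0) (spec_norm_ge0 W)) norm24.
  lra.
apply: le_powR_inv3; first exact: norm4_ge0.
rewrite -(ler_pM2l (_ : 0 < beta / 2)) ?divr_gt0 //.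
by rewrite [leRHS](_ : _ = sigma * spec_norm W * (N * M)) //; field; rewrite gt_eqF.
Qed.
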